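(* Let $\lambda$ and $g$ be as in the context. Let $b^{(1)}\in[0,c^{(1)}]$ be the point with $g(b^{(1)})=0$ and set $b^{(2)}=b^{(1)}/\lambda$. Then $g(b^{(2)})=b^{(1)}$.
   Context: There is a unique constant $\lambda=2.5029\ldots$ and a unique infinitely (period-doubling) renormalizable analytic unimodal map $g:[-1,1]\to[-1,1]$ solving $g(x)=-\lambda\, g^{2}(-x/\lambda)$ for $-1\le x\le1$ ($g^2=g\circ g$). Unimodal means: $-1$ is the unique fixed point with positive multiplier, $g(1)=-1$, and $g$ has a unique maximum at an interior nondegenerate critical point $c^{(0)}$. Moreover $g$ is analytic near $[-1,1]$, even, concave on $[-c^{(1)},c^{(1)}]$ where $c^{(1)}=g(c^{(0)})$, satisfies $g(c^{(1)})=-c^{(1)}/\lambda$, $g'(c^{(1)})=-\lambda$, and has negative Schwarzian derivative. *)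

From Stdlib Require Import Reals Lra.
From Coquelicot Require Import Coquelicot.
Open Scope R_scope.

Definition analytic_near (f : R -> R) (a b : R) : Prop :=
  exists eps : R, 0 < eps /\
    forall x0 : R, a - eps < x0 < b + eps ->
      exists (r : R) (c : nat -> R), 0 < r /\
        forall x : R, Rabs (x - x0) < r ->
          ex_pseries c (x - x0) /\ f x = PSeries c (x - x0).

Definition schwarzian (f : R -> R) (x : R) : R :=
  Derive_n f 3 x / Derive f x - 3 / 2 * (Derive_n f 2 x / Derive f x) ^ 2.

Definition negative_schwarzian (f : R -> R) : Prop :=
  forall x : R, -1 <= x <= 1 -> Derive f x <> 0 -> schwarzian f x < 0.

Definition unimodal (f : R -> R) (c0 : R) : Prop :=
  (forall x, -1 <= x <= 1 -> -1 <= f x <= 1) /\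
  f (-1) = -1 /\ Derive f (-1) > 0 /\
  (forall x, -1 <= x <= 1 -> f x = x -> Derive f x > 0 -> x = -1) /\
  f 1 = -1 /\
  -1 < c0 < 1 /\
  (forall x, -1 <= x <= 1 -> x <> c0 -> f x < f c0) /\
  Derive f c0 = 0 /\ Derive_n f 2 c0 <> 0.

Definition concave_on (f : R -> R) (a b : R) : Prop :=
  forall x y t, a <= x <= b -> a <= y <= b -> 0 <= t <= 1 ->
    t * f x + (1 - t) * f y <= f (t * x + (1 - t) * y).

(* The critical point is 0 by evenness.  Evaluating the renormalization
   equation at -b1 gives g (g b2) = 0.  Concavity on [-c1, c1] with g 0 = c1 > 0
   forces g to be positive on [0, b1) and to have b1 as its only zero in
   [0, c1]; since b2 < b1, the point g b2 lies in (0, c1], so g b2 = b1. *)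
From Stdlib Require Import Reals Lra.
From Coquelicot Require Import Coquelicot.
Open Scope R_scope.

Lemma concave_on_pos (f : R -> R) (a b x y u : R) :
  concave_on f a b -> a <= x -> y <= b -> x <= u < y ->
  0 < f x -> 0 <= f y -> 0 < f u.
Proof.
  intros Hconc Hax Hyb Hu Hfx Hfy.
  set (t := (y - u) / (y - x)).
  assert (Ht0 : 0 < t) by (apply Rdiv_lt_0_compat; lra).
  assert (Ht1 : t <= 1).
  { apply (Rmult_le_reg_r (y - x)); [lra|].
    unfold t; field_simplify; lra. }
  assert (Hu_comb : t * x + (1 - t) * y = u) by (unfold t; field; lra).
  pose proof (Hconc x y t ltac:(lra) ltac:(lra) ltac:(lra)) as Hle.
  rewrite Hu_comb in Hle.
  assert (0 < t * f x) by (apply Rmult_lt_0_compat; lra).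
  assert (0 <= (1 - t) * f y) by (apply Rmult_le_pos; lra).
  lra.
Qed.

Lemma concave_on_zero_unique (f : R -> R) (a b u v : R) :
  concave_on f a b -> a <= 0 -> 0 < f 0 ->
  0 <= u <= b -> 0 <= v <= b -> f u = 0 -> f v = 0 -> u = v.
Proof.
  intros Hconc Ha Hf0 Hu Hv Hfu Hfv.
  destruct (Rtotal_order u v) as [Hlt | [Heq | Hgt]]; [| exact Heq |].
  - pose proof (concave_on_pos f a b 0 v u Hconc Ha ltac:(lra) ltac:(lra) Hf0 ltac:(lra)).
    lra.
  - pose proof (concave_on_pos f a b 0 u v Hconc Ha ltac:(lra) ltac:(lra) Hf0 ltac:(lra)).
    lra.
Qed.

Lemma unimodal_even_crit0 (g : R -> R) (c0 : R) :
  unimodal g c0 -> (forall x, -1 <= x <= 1 -> g (- x) = g x) -> c0 = 0.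
Proof.
  intros [_ [_ [_ [_ [_ [Hc0 [Hmax _]]]]]]] Hev.
  destruct (Req_dec c0 0) as [| Hne]; [assumption |].
  pose proof (Hmax (- c0) ltac:(lra) ltac:(lra)) as Hlt.
  rewrite (Hev c0 ltac:(lra)) in Hlt.
  lra.
Qed.

Lemma renormalization_zero (lambda : R) (g : R -> R) (b : R) :
  0 < lambda ->
  (forall x, -1 <= x <= 1 -> g x = - lambda * g (g (- x / lambda))) ->
  (forall x, -1 <= x <= 1 -> g (- x) = g x) ->
  -1 <= b <= 1 -> g b = 0 -> g (g (b / lambda)) = 0.
Proof.
  intros Hl Hren Hev Hb Hgb.
  pose proof (Hren (- b) ltac:(lra)) as E.
  rewrite Hev, Hgb in E by lra.
  replace (- - b / lambda) with (b / lambda) in E by (field; lra).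
  nra.
Qed.

Theorem mainTheorem4 (lambda : R) (g : R -> R) (c0 : R) :
  2.5029 <= lambda < 2.5030 ->
  (forall x, -1 <= x <= 1 -> g x = - lambda * g (g (- x / lambda))) ->
  unimodal g c0 ->
  analytic_near g (-1) 1 ->
  (forall x, -1 <= x <= 1 -> g (- x) = g x) ->
  concave_on g (- g c0) (g c0) ->
  g (g c0) = - g c0 / lambda ->
  Derive g (g c0) = - lambda ->
  negative_schwarzian g ->
  forall b1 : R, 0 <= b1 <= g c0 -> g b1 = 0 ->
    g (b1 / lambda) = b1.
Proof.
  intros Hl Hren Huni _ Hev Hconc _ _ _ b1 Hb1 Hgb1.
  pose proof (unimodal_even_crit0 g c0 Huni Hev) as Hc0; subst c0.
  destruct Huni as [Hrange [_ [_ [_ [_ [_ [Hmax _]]]]]]].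
  pose proof (Hrange 0 ltac:(lra)) as Hc1.
  destruct (Req_dec b1 0) as [Hb0 | Hb0].
  { subst b1. unfold Rdiv. rewrite Rmult_0_l. exact Hgb1. }
  assert (Hg0 : 0 < g 0) by (pose proof (Hmax b1 ltac:(lra) Hb0); lra).
  assert (Hb2 : 0 <= b1 / lambda < b1).
  { split; [apply Rdiv_le_0_compat; lra |].
    apply (Rmult_lt_reg_r lambda); [lra |]. field_simplify; nra. }
  assert (Hgb2_pos : 0 < g (b1 / lambda)).
  { apply (concave_on_pos g (- g 0) (g 0) 0 b1 _ Hconc); lra. }
  assert (Hgb2_max : g (b1 / lambda) <= g 0).
  { destruct (Req_dec (b1 / lambda) 0) as [E | Hne]; [rewrite E; lra |].
    apply Rlt_le, Hmax; [lra | exact Hne]. }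
  apply (concave_on_zero_unique g (- g 0) (g 0) _ _ Hconc); try lra.
  exact (renormalization_zero lambda g b1 ltac:(lra) Hren Hev ltac:(lra) Hgb1).
Qed.
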